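(* Let $(K,C,S)$ be the associated layered complex of a divided simplicial complex $(K,S^0)$. Suppose that $(K,C,S)$ does not admit an intermediate collapse. If $(K',C',S)$ is obtained from $(K,C,S)$ by a $C$-collapse, then $(K',C',S)$ still does not admit an intermediate collapse.
   Context: A simplicial complex $K$ is a set of finite nonempty sets (simplices) closed under passing to nonempty subsets (faces); $K^0$ is its vertex set; $t<s$ means $t$ is a proper face of $s$. A simplex is principal in $K$ if it is not a proper face of any simplex of $K$; $s$ is free in $K$ if it is a proper face of a principal simplex $p$ and of no other simplex of $K$. A layered simplicial complex is $(K,C,S)$ with $C,S$ disjoint subcomplexes; $\mathrm{IM}(K,C,S)$ denotes simplices in neither $C$ nor $S$. A divided simplicial complex is $(K,S^0)$, $S^0\subseteq K^0$; its associated layered complex has $S$ = simplices with all vertices in $S^0$, $C$ = simplices with all vertices in $K^0-S^0$. An elementary $C$-collapse replaces $(K,C,S)$ by $(K-\{s,p\},C-\{s,p\},S)$ where $p\in C$ is principal in $K$ and $s$ is a face of $p$ free in $K$; a $C$-collapse is a finite sequence of these. $(K,C,S)$ (associated to a divided complex) admits an intermediate collapse if there exist simplices $s,p$ with (i) $p\in\mathrm{IM}(K,C,S)$, (ii) $p$ principal in $K$, (iii) $s$ a face of $p$ free in $K$, (iv) every $t\in S$ with $t<p$ satisfies $t<s$. *)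

From mathcomp Require Import all_boot.
Set Implicit Arguments. Unset Strict Implicit. Unset Printing Implicit Defensive.

Section Simplicial.
Variable V : finType.
Notation cplx := {set {set V}}.

Definition is_complex (K : cplx) : Prop :=
  set0 \notin K /\
  forall s t : {set V}, s \in K -> t \subset s -> t != set0 -> t \in K.

Definition vertices (K : cplx) : {set V} := \bigcup_(s in K) s.

Definition principal (K : cplx) (p : {set V}) : Prop :=
  p \in K /\ forall q, q \in K -> ~~ (p \proper q).

Definition free (K : cplx) (s : {set V}) : Prop :=
  exists p, [/\ principal K p, s \proper p &
    forall q, q \in K -> s \proper q -> q = p].

(* associated layered complex of the divided complex (K, S0) *)
Definition assocS (K : cplx) (S0 : {set V}) : cplx :=
  [set s in K | s \subset S0].
Definition assocC (K : cplx) (S0 : {set V}) : cplx :=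
  [set s in K | s \subset vertices K :\: S0].

Definition elem_Ccollapse (K C K' C' : cplx) : Prop :=
  exists s p : {set V},
    [/\ p \in C, principal K p, s \subset p, free K s &
        (K' = K :\: [set s; p] /\ C' = C :\: [set s; p])].

Inductive Ccollapse : cplx -> cplx -> cplx -> cplx -> Prop :=
| Ccollapse_refl K C : Ccollapse K C K C
| Ccollapse_step K C K1 C1 K' C' :
    elem_Ccollapse K C K1 C1 -> Ccollapse K1 C1 K' C' -> Ccollapse K C K' C'.

Definition IM (K C S : cplx) : cplx := [set s in K | (s \notin C) && (s \notin S)].

Definition admits_intermediate_collapse (K C S : cplx) : Prop :=
  exists s p : {set V},
    [/\ p \in IM K C S, principal K p, s \subset p, free K s &
        forall t, t \in S -> t \proper p -> t \proper s].

End Simplicial.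

From mathcomp Require Import all_boot.
Set Implicit Arguments. Unset Strict Implicit.

(* Along a C-collapse the current C stays the set of simplices avoiding S0, so
   the two simplices removed at each step avoid S0.  If (s, p) is an
   intermediate collapse after the step, then p is not in C, hence has a vertex
   y in S0; the vertex {y} lies in S and is a proper face of p, so by (iv) it
   is a face of s.  Every coface of s or p therefore contains y and was not
   removed, so p is still principal and s still free before the step. *)

Section IntermediateCollapse.
Variable V : finType.
Notation cplx := {set {set V}}.

Definition avoiding (K : cplx) (S0 : {set V}) : cplx :=
  [set q in K | q \subset ~: S0].

Lemma assocC_avoiding (K : cplx) (S0 : {set V}) :
  assocC K S0 = avoiding K S0.
Proof.
apply/setP => q; rewrite !inE; case qK: (q \in K) => //=.
by rewrite setDE subsetI (bigcup_sup q qK).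
Qed.

Lemma avoidingD (K R : cplx) (S0 : {set V}) :
  avoiding (K :\: R) S0 = avoiding K S0 :\: R.
Proof. by apply/setP => q; rewrite !inE andbA. Qed.

Lemma principal_setD (K R : cplx) (p : {set V}) :
  {in R, forall q : {set V}, ~~ (p \proper q)} ->
  principal (K :\: R) p -> principal K p.
Proof.
move=> Rp [/setDP [pK _] pmax]; split=> // q qK.
have [/Rp //|qR] := boolP (q \in R).
by apply: pmax; rewrite inE qR.
Qed.

Lemma free_setD (K R : cplx) (s : {set V}) :
  {in R, forall q : {set V}, ~~ (s \proper q)} ->
  free (K :\: R) s -> free K s.
Proof.
move=> Rs [p [pprinc sp puniq]]; exists p; split=> //.
  apply: principal_setD pprinc => q qR.
  exact: contra (proper_trans sp) (Rs q qR).
move=> q qK sq; have qR : q \notin R by apply: contraL sq; apply: Rs.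
by apply: puniq sq; rewrite inE qR.
Qed.

Lemma intermediate_face_meets (K0 : cplx) (S0 s p : {set V}) :
  is_complex K0 -> p \in K0 -> p \notin assocS K0 S0 ->
  ~~ (p \subset ~: S0) ->
  (forall t, t \in assocS K0 S0 -> t \proper p -> t \proper s) ->
  ~~ (s \subset ~: S0).
Proof.
move=> [_ K0faces] pK0 pS /subsetPn [y yp]; rewrite inE negbK => yS0 Hiv.
have yS : [set y] \in assocS K0 S0.
  rewrite inE sub1set yS0 andbT.
  apply: K0faces pK0 _ _; first by rewrite sub1set.
  by apply/set0Pn; exists y; rewrite inE.
have yp' : [set y] \proper p.
  rewrite properEneq sub1set yp andbT.
  by apply: contraNneq pS => <-.
apply/subsetPn; exists y; last by rewrite inE negbK.
by rewrite -sub1set (proper_sub (Hiv _ yS yp')).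
Qed.

Lemma elem_Ccollapse_avoiding (K K1 C1 : cplx) (S0 : {set V}) :
  elem_Ccollapse K (avoiding K S0) K1 C1 ->
  K1 \subset K /\ C1 = avoiding K1 S0.
Proof.
by case=> [sg [pi [_ _ _ _ [-> ->]]]]; rewrite subsetDl avoidingD.
Qed.

Lemma intermediate_collapse_lift (K0 K K1 C1 : cplx) (S0 : {set V}) :
  is_complex K0 -> K \subset K0 ->
  elem_Ccollapse K (avoiding K S0) K1 C1 ->
  admits_intermediate_collapse K1 C1 (assocS K0 S0) ->
  admits_intermediate_collapse K (avoiding K S0) (assocS K0 S0).
Proof.
move=> HK0 sKK0 [sg [pi [piC _ sgpi _ [-> ->]]]].
set R := [set sg; pi].
move=> [s [p [+ pprinc sp sfree Hiv]]].
rewrite inE => /and3P [/setDP [pK pR] pC pS].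
rewrite in_setD pR inE pK /= in pC.
have sS0 := intermediate_face_meets HK0 (subsetP sKK0 p pK) pS pC Hiv.
have RS0 : {in R, forall q : {set V}, q \subset ~: S0}.
  move: piC; rewrite inE => /andP [_ piS0] q.
  by rewrite !inE => /orP [] /eqP ->; first exact: subset_trans sgpi piS0.
have Rs : {in R, forall q : {set V}, ~~ (s \proper q)}.
  move=> q /RS0 qS0; apply: contra sS0 => /proper_sub sq.
  exact: subset_trans sq qS0.
exists s, p; split => //.
- by rewrite inE pK pS inE pK (negbTE pC).
- apply: principal_setD pprinc => q /Rs.
  exact: contra (sub_proper_trans sp).
- exact: free_setD sfree.
Qed.

Lemma Ccollapse_no_intermediate (K0 : cplx) (S0 : {set V}) K C K' C' :
  is_complex K0 -> Ccollapse K C K' C' -> K \subset K0 ->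
  C = avoiding K S0 ->
  ~ admits_intermediate_collapse K C (assocS K0 S0) ->
  ~ admits_intermediate_collapse K' C' (assocS K0 S0).
Proof.
move=> HK0; elim=> {K C K' C'} // K C K1 C1 K' C' collapse1 _ IH sKK0 CE noI.
rewrite CE in collapse1 noI.
have [sK1K C1E] := elem_Ccollapse_avoiding collapse1.
apply: IH C1E _; first exact: subset_trans sK1K sKK0.
by move/(intermediate_collapse_lift HK0 sKK0 collapse1).
Qed.

End IntermediateCollapse.

Theorem proposition4p17 (V : finType) (K : {set {set V}}) (S0 : {set V}) :
  is_complex K -> S0 \subset vertices K ->
  ~ admits_intermediate_collapse K (assocC K S0) (assocS K S0) ->
  forall K' C' : {set {set V}},
    Ccollapse K (assocC K S0) K' C' ->
    ~ admits_intermediate_collapse K' C' (assocS K S0).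
Proof.
move=> HK _ noI K' C' collapse.
exact: Ccollapse_no_intermediate HK collapse (subxx K)
  (assocC_avoiding K S0) noI.
Qed.
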